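(* Consider the following permutation model $\mathcal V$ (in $\mathsf{ZFA}$ with choice in the ground). Let $A_0$ be an arbitrary infinite set and $G_0$ the group of all permutations of $A_0$. Recursively, let $A_{n+1}=A_n\cup\{(n+1,p,\varepsilon): p\in\bigcup_{k=0}^{n+1}A_n^k,\ \varepsilon\in\{0,1\}\}$, and let $G_{n+1}$ be the group of all permutations $\sigma$ of $A_{n+1}$ for which there exist $\pi_\sigma\in G_n$ and bits $\varepsilon_{\sigma,p}\in\{0,1\}$ (for $p\in\bigcup_{k=0}^{n+1}A_n^k$) with $\sigma(x)=\pi_\sigma(x)$ for $x\in A_n$ and $\sigma((n+1,p,\varepsilon))=(n+1,\pi_\sigma(p),\varepsilon_{\sigma,p}+_2\varepsilon)$, where $\pi_\sigma(\langle p_0,\dots,p_{l-1}\rangle)=\langle\pi_\sigma(p_0),\dots,\pi_\sigma(p_{l-1})\rangle$ and $+_2$ is addition mod 2. Let $A=\bigcup_{n\in\omega}A_n$ be the set of atoms, $G=\{H\in\mathrm{Aut}(A):\forall n\in\omega\ (H\restriction A_n\in G_n)\}$, and let $\mathcal V$ be the class of hereditarily symmetric sets with respect to finite supports. Let $\mathfrak m=|A|$. Then in $\mathcal V$: $$\mathfrak m^2<\mathrm{seq}^{1-1}(\mathfrak m)<[\mathfrak m]^2<\mathrm{fin}(\mathfrak m).$$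
   Context: $\mathrm{Aut}(A)$ is the group of all permutations of $A$. Permutation model: $\pi\in G$ acts on sets by $\pi x=\{\pi y:y\in x\}$; $\mathrm{Fix}_G(E)=\{\pi\in G:\pi a=a\ \forall a\in E\}$; a set $x$ is symmetric if for some finite $E\subseteq A$ (a support), every $\pi\in\mathrm{Fix}_G(E)$ satisfies $\pi x=x$; $\mathcal V$ is the class of hereditarily symmetric sets. For a set $M$: $M^2=M\times M$, $[M]^2$ = 2-element subsets, $\mathrm{seq}^{1-1}(M)$ = finite sequences without repetition, $\mathrm{fin}(M)$ = finite subsets; for $\mathfrak m=|M|$ the corresponding symbols denote cardinalities. $|X|<|Y|$ means an injection $X\to Y$ exists but no bijection. *)

From Stdlib Require Import List Bool Arith.
Import ListNotations.
Set Implicit Arguments.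

Section Model.
Variable A0 : Type.

(* Atoms: [base x] is x in A_0; [lev m p e] is the triple (m, p, e). *)
Inductive atom : Type :=
| base : A0 -> atom
| lev : nat -> list atom -> bool -> atom.

Fixpoint inA (n : nat) (a : atom) : Prop :=
  match n with
  | 0 => exists x, a = base x
  | S m => inA m a \/
           exists p e, a = lev (S m) p e /\ length p <= S m /\ Forall (inA m) p
  end.

Definition inAll (a : atom) : Prop := exists n, inA n a.

Definition perm_on (S : atom -> Prop) (s : atom -> atom) : Prop :=
  (forall x, S x -> S (s x)) /\
  (forall x y, S x -> S y -> s x = s y -> x = y) /\
  (forall y, S y -> exists x, S x /\ s x = y).

Fixpoint inG (n : nat) (s : atom -> atom) : Prop :=
  match n with
  | 0 => perm_on (inA 0) s
  | S m => perm_on (inA (S m)) s /\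
      exists pi : atom -> atom, inG m pi /\
        (forall x, inA m x -> s x = pi x) /\
        exists eps : list atom -> bool,
          forall (p : list atom) (e : bool), length p <= S m -> Forall (inA m) p ->
            s (lev (S m) p e) = lev (S m) (map pi p) (xorb (eps p) e)
  end.

Definition inGfull (H : atom -> atom) : Prop :=
  perm_on inAll H /\ forall n, inG n H.

Definition fixes (E : list atom) (pi : atom -> atom) : Prop :=
  forall a, In a E -> pi a = a.

(* An injection X -> Y exists in V: a function which is equivariant under
   Fix_G(E) for some finite support E included in A. *)
Definition V_inj {X Y : Type} (memX : X -> Prop) (actX : (atom -> atom) -> X -> X)
    (memY : Y -> Prop) (actY : (atom -> atom) -> Y -> Y) : Prop :=
  exists (f : X -> Y) (E : list atom),
    Forall inAll E /\
    (forall x, memX x -> memY (f x)) /\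
    (forall x y, memX x -> memX y -> f x = f y -> x = y) /\
    (forall pi, inGfull pi -> fixes E pi ->
       forall x, memX x -> f (actX pi x) = actY pi (f x)).

Definition V_bij {X Y : Type} (memX : X -> Prop) (actX : (atom -> atom) -> X -> X)
    (memY : Y -> Prop) (actY : (atom -> atom) -> Y -> Y) : Prop :=
  exists (f : X -> Y) (E : list atom),
    Forall inAll E /\
    (forall x, memX x -> memY (f x)) /\
    (forall x y, memX x -> memX y -> f x = f y -> x = y) /\
    (forall y, memY y -> exists x, memX x /\ f x = y) /\
    (forall pi, inGfull pi -> fixes E pi ->
       forall x, memX x -> f (actX pi x) = actY pi (f x)).

Definition V_lt {X Y : Type} (memX : X -> Prop) (actX : (atom -> atom) -> X -> X)
    (memY : Y -> Prop) (actY : (atom -> atom) -> Y -> Y) : Prop :=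
  V_inj memX actX memY actY /\ ~ V_bij memX actX memY actY.

Definition sq_mem (q : atom * atom) : Prop := inAll (fst q) /\ inAll (snd q).
Definition sq_act (pi : atom -> atom) (q : atom * atom) : atom * atom :=
  (pi (fst q), pi (snd q)).

Definition seq_mem (l : list atom) : Prop := Forall inAll l /\ NoDup l.
Definition seq_act (pi : atom -> atom) (l : list atom) : list atom := map pi l.

Definition set_act (pi : atom -> atom) (S : atom -> Prop) : atom -> Prop :=
  fun b => exists y, S y /\ pi y = b.

Definition pair_mem (S : atom -> Prop) : Prop :=
  (forall x, S x -> inAll x) /\
  exists a b, a <> b /\ forall x, S x <-> (x = a \/ x = b).

Definition fin_mem (S : atom -> Prop) : Prop :=
  (forall x, S x -> inAll x) /\ exists l : list atom, forall x, S x <-> In x l.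

End Model.

(* Elements of G may flip the bit e of each triple (m, p, e) independently,
   and in particular all leaves (m, [], e) of chosen levels at once.  A
   putative bijection f has a finite support E, and every element of G fixing
   E commutes with f, so it fixes a point iff it fixes its image.  Leaves at
   levels above every level occurring in E, and triples not occurring in E,
   can be flipped without moving E; images built from such leaves are fixed by
   flips that must move some atom of their preimage. *)

From Stdlib Require Import List Bool Arith Lia.
From Stdlib Require Import Classical ClassicalEpsilon FunctionalExtensionality PropExtensionality.
Import ListNotations.
Set Implicit Arguments.
Unset Strict Implicit.

Section Atoms.
Variable A0 : Type.
Local Notation atom := (atom A0).

Definition atom_ind_nested (P : atom -> Prop) (Hbase : forall z, P (base z))
    (Hlev : forall m p e, Forall P p -> P (lev m p e)) : forall a, P a :=
  fix F a := match a with
  | base z => Hbase z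
  | lev m p e => Hlev m p e ((fix G l := match l return Forall P l with
                   | [] => Forall_nil _
                   | x :: l' => Forall_cons _ (F x) (G l') end) p)
  end.

Lemma map_id_in (f : atom -> atom) p : map f p = p -> forall x, In x p -> f x = x.
Proof.
  induction p as [|y p IH]; simpl; intros Hp x Hx; [easy|].
  injection Hp as Hy Hp. destruct Hx as [<-|Hx]; auto.
Qed.

Lemma in_list_max l n : In n l -> n <= list_max l.
Proof.
  intros Hn. pose proof (proj1 (list_max_le l (list_max l)) (le_n _)) as H.
  rewrite Forall_forall in H. auto.
Qed.

Fixpoint subatoms (a : atom) : list atom :=
  match a with
  | base _ => [a]
  | lev _ p _ => a :: flat_map subatoms p
  end.

Lemma subatoms_trans y u : In u (subatoms y) -> incl (subatoms u) (subatoms y).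
Proof.
  revert u; induction y as [z|m p e IH] using atom_ind_nested; simpl; intros u Hu.
  - destruct Hu as [<-|[]]; apply incl_refl.
  - destruct Hu as [<-|Hu]; [apply incl_refl|].
    apply in_flat_map in Hu as [x [Hx Hu]]. rewrite Forall_forall in IH.
    intros w Hw. right. apply in_flat_map. exists x. split; auto. exact (IH x Hx u Hu w Hw).
Qed.

(* The element of G induced by a permutation [s] of A_0 and the bits
   [F m p] = epsilon_{sigma, p} at every level [m]. *)
Fixpoint relabel (s : A0 -> A0) (F : nat -> list atom -> bool) (a : atom) : atom :=
  match a with
  | base z => base (s z)
  | lev m p e => lev m (map (relabel s F) p) (xorb (F m p) e)
  end.

Definition top_fixed (s : A0 -> A0) (F : nat -> list atom -> bool) (u : atom) : Prop :=
  match u with base z => s z = z | lev m p _ => F m p = false end.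

Lemma relabel_fixed_iff s F y :
  relabel s F y = y <-> forall u, In u (subatoms y) -> top_fixed s F u.
Proof.
  induction y as [z|m p e IH] using atom_ind_nested; simpl.
  - split.
    + intros Hz u [<-|[]]. simpl. congruence.
    + intros Hu. f_equal. exact (Hu (base z) (or_introl eq_refl)).
  - rewrite Forall_forall in IH. split.
    + intros Hy. injection Hy as Hp He. intros u [<-|Hu].
      * simpl. destruct (F m p), e; simpl in *; congruence.
      * apply in_flat_map in Hu as [x [Hx Hu]].
        apply (IH x Hx); auto. exact (map_id_in Hp Hx).
    + intros Hu. rewrite (Hu (lev m p e) (or_introl eq_refl)). simpl. f_equal.
      rewrite <- (map_id p) at 2. apply map_ext_in. intros x Hx. apply IH; auto.
      intros w Hw. apply Hu. right. apply in_flat_map. eauto.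
Qed.


Definition level (a : atom) : nat := match a with base _ => 0 | lev m _ _ => m end.

Definition leaf n e : atom := lev n [] e.

Lemma inA_lev n m (p : list atom) e : inA n (lev m p e) ->
  exists k, m = S k /\ k < n /\ length p <= S k /\ Forall (inA k) p.
Proof.
  induction n as [|n IH]; simpl.
  - intros [x Hx]; discriminate.
  - intros [H|[p' [e' [Heq [Hl Hp]]]]].
    + destruct (IH H) as [k Hk]. exists k; intuition lia.
    + injection Heq as -> -> ->. exists n; intuition lia.
Qed.

Lemma inA_mono k k' (a : atom) : k <= k' -> inA k a -> inA k' a.
Proof. induction 1; simpl; auto. Qed.

Lemma inA_level n (a : atom) : inA n a -> inA (level a) a.
Proof.
  revert a; induction n as [|n IH]; intros a Ha.
  - destruct Ha as [x ->]. simpl. eauto.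
  - destruct Ha as [Ha|[p [e [-> [Hl Hp]]]]]; auto. simpl. right. eauto.
Qed.

Lemma lev_inA k (p : list atom) e :
  length p <= S k -> Forall (inA k) p -> inA (S k) (lev (S k) p e).
Proof. intros Hl Hp. simpl. right. eauto. Qed.

Lemma lev_inAll_bit m (p : list atom) e e' : inAll (lev m p e) -> inAll (lev m p e').
Proof.
  intros [n Hn]. destruct (inA_lev Hn) as [k [-> [Hk [Hl Hp]]]].
  exists (S k). apply lev_inA; auto.
Qed.

Lemma leaf_inA k e : inA (S k) (leaf (S k) e).
Proof. apply lev_inA; simpl; auto with arith. Qed.

Lemma leaf_inAll k e : inAll (leaf (S k) e).
Proof. exists (S k). apply leaf_inA. Qed.

Section Relabel.
Variables (s t : A0 -> A0) (F : nat -> list atom -> bool).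
Hypotheses (st : forall z, s (t z) = z) (ts : forall z, t (s z) = z).

Lemma relabel_inA n a : inA n a -> inA n (relabel s F a).
Proof.
  revert a; induction n as [|n IH]; simpl.
  - intros a [x ->]. simpl. eauto.
  - intros a [Ha|[p [e [-> [Hl Hp]]]]]; [left; auto|right].
    exists (map (relabel s F) p), (xorb (F (S n) p) e).
    rewrite length_map. repeat split; auto.
    apply Forall_map. exact (Forall_impl _ (IH) Hp).
Qed.

Lemma relabel_inj a b : relabel s F a = relabel s F b -> a = b.
Proof.
  revert b; induction a as [z|m p e IH] using atom_ind_nested; intros [z'|m' p' e'];
    simpl; intros Hab; try discriminate.
  - injection Hab as Hz. rewrite <- (ts z), <- (ts z'), Hz. reflexivity.
  - injection Hab as <- Hp He.
    assert (p = p') as <-.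
    { clear He. revert p' Hp; induction IH as [|x p Hx _ IHp]; intros [|x' p'] Hp;
        simpl in Hp; try discriminate; auto.
      injection Hp as H1 H2. f_equal; auto. }
    f_equal. destruct (F m p), e, e'; simpl in *; congruence.
Qed.

Lemma relabel_surj n y : inA n y -> exists x, inA n x /\ relabel s F x = y.
Proof.
  revert y; induction n as [|n IH]; simpl.
  - intros y [z ->]. exists (base (t z)). simpl. rewrite st. eauto.
  - intros y [Hy|[q [e [-> [Hl Hq]]]]].
    + destruct (IH _ Hy) as [x [Hx <-]]. eauto.
    + assert (exists p, Forall (inA n) p /\ map (relabel s F) p = q) as [p [Hp <-]].
      { clear Hl. induction Hq as [|y q Hy _ [p [Hp <-]]]; [exists []; auto|].
        destruct (IH _ Hy) as [x [Hx <-]]. exists (x :: p). auto. }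
      rewrite length_map in Hl.
      exists (lev (S n) p (xorb (F (S n) p) e)). split.
      * right. eauto.
      * simpl. f_equal. destruct (F (S n) p), e; reflexivity.
Qed.

Lemma relabel_perm_on n : perm_on (inA n) (relabel s F).
Proof.
  split; [|split]; [apply relabel_inA | intros; apply relabel_inj; auto | apply relabel_surj].
Qed.

Lemma relabel_inGfull : inGfull (relabel s F).
Proof.
  split.
  - split; [|split].
    + intros x [n Hx]. exists n. apply relabel_inA; auto.
    + intros; apply relabel_inj; auto.
    + intros y [n Hy]. destruct (relabel_surj Hy) as [x [Hx <-]].
      exists x. split; [exists n|]; auto.
  - induction n as [|n IH]; [apply relabel_perm_on|].
    split; [apply relabel_perm_on|].
    exists (relabel s F). repeat split; auto. exists (F (S n)). reflexivity.
Qed.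

End Relabel.

Lemma inGfull_inAll pi (a : atom) : inGfull pi -> inAll a -> inAll (pi a).
Proof. intros [[H _] _]; auto. Qed.

Lemma inGfull_inj pi (a b : atom) :
  inGfull pi -> inAll a -> inAll b -> pi a = pi b -> a = b.
Proof. intros [[_ [H _]] _]; eauto. Qed.

Lemma inGfull_lev pi m (p : list atom) e : inGfull pi -> inAll (lev m p e) ->
  exists b, forall e', pi (lev m p e') = lev m (map pi p) (xorb b e').
Proof.
  intros [_ HG] [n H]. destruct (inA_lev H) as [k [-> [_ [Hl Hp]]]].
  destruct (HG (S k)) as [_ [pi' [_ [Hpi [eps Heps]]]]].
  exists (eps p). intros e'. rewrite Heps; auto. f_equal.
  apply map_ext_in. intros x Hx. rewrite Forall_forall in Hp. symmetry; auto.
Qed.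

Lemma inGfull_level pi (a : atom) : inGfull pi -> inAll a -> level (pi a) = level a.
Proof.
  intros HG [n Ha]. destruct a as [z|m p e].
  - destruct HG as [_ HG]. destruct (HG 0) as [H0 _].
    assert (Hz : inA 0 (base z)) by (exists z; reflexivity).
    destruct (H0 _ Hz) as [x ->]. reflexivity.
  - destruct (inGfull_lev HG (ex_intro _ n Ha)) as [b ->]. reflexivity.
Qed.


(** * Flipping automorphisms and fresh levels *)

Definition has_leaf n (y : atom) : Prop := exists e, In (leaf n e) (subatoms y).

Definition leaf_flip (P : nat -> bool) : atom -> atom :=
  relabel id (fun m p => match p with [] => P m | _ => false end).

Definition pair_flip m (p : list atom) : atom -> atom :=
  relabel id (fun m' p' => if excluded_middle_informative (m' = m /\ p' = p) then true else false).

Definition transp (z z' w : A0) : A0 :=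
  if excluded_middle_informative (w = z) then z'
  else if excluded_middle_informative (w = z') then z else w.

Definition base_swap (z z' : A0) : atom -> atom := relabel (transp z z') (fun _ _ => false).

Lemma leaf_flip_inGfull P : inGfull (leaf_flip P).
Proof. exact (relabel_inGfull (t := id) _ (fun _ => eq_refl) (fun _ => eq_refl)). Qed.

Lemma pair_flip_inGfull m p : inGfull (pair_flip m p).
Proof. exact (relabel_inGfull (t := id) _ (fun _ => eq_refl) (fun _ => eq_refl)). Qed.

Lemma transpK z z' w : transp z z' (transp z z' w) = w.
Proof.
  unfold transp.
  destruct (excluded_middle_informative (w = z)) as [->|Hz];
    [|destruct (excluded_middle_informative (w = z')) as [->|Hz']];
    repeat match goal with
    | |- context [excluded_middle_informative ?P] =>
        destruct (excluded_middle_informative P); subst; try congruence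
    end.
Qed.

Lemma base_swap_inGfull z z' : inGfull (base_swap z z').
Proof. exact (relabel_inGfull _ (transpK z z') (transpK z z')). Qed.

Lemma leaf_flip_leaf P n e : leaf_flip P (leaf n e) = leaf n (xorb (P n) e).
Proof. reflexivity. Qed.

Lemma leaf_flip_lev P m p e :
  p <> [] -> leaf_flip P (lev m p e) = lev m (map (leaf_flip P) p) e.
Proof. destruct p; [congruence|reflexivity]. Qed.

Lemma leaf_flip_fixed_iff P y :
  leaf_flip P y = y <-> forall n, P n = true -> ~ has_leaf n y.
Proof.
  unfold leaf_flip. rewrite relabel_fixed_iff. split.
  - intros Hy n Hn [e He]. specialize (Hy _ He). simpl in Hy. congruence.
  - intros Hy [z|m [|x p] e] Hu; simpl; auto.
    destruct (P m) eqn:Hm; auto. exfalso. exact (Hy m Hm (ex_intro _ e Hu)).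
Qed.

Lemma pair_flip_self m p e :
  pair_flip m p (lev m p e) = lev m (map (pair_flip m p) p) (negb e).
Proof.
  unfold pair_flip at 1. simpl.
  destruct (excluded_middle_informative (m = m /\ p = p)) as [_|[]]; auto.
Qed.

Lemma pair_flip_fixed m p y :
  (forall e, ~ In (lev m p e) (subatoms y)) -> pair_flip m p y = y.
Proof.
  intros Hy. apply relabel_fixed_iff. intros [z|m' p' e'] Hu; simpl; auto.
  destruct (excluded_middle_informative (m' = m /\ p' = p)) as [[-> ->]|]; auto.
  exfalso. exact (Hy e' Hu).
Qed.

Lemma pair_flip_leaf m p n e : p <> [] -> pair_flip m p (leaf n e) = leaf n e.
Proof.
  intros Hp. apply pair_flip_fixed. intros e' [H|[]]. injection H. congruence.
Qed.

Definition level_bound (E : list atom) : nat := list_max (map level (flat_map subatoms E)).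

Lemma fresh_not_has_leaf E y n : In y E -> level_bound E < n -> ~ has_leaf n y.
Proof.
  intros Hy Hn [e He].
  assert (Hl : In n (map level (flat_map subatoms E))).
  { apply (in_map level (flat_map subatoms E) (leaf n e)). apply in_flat_map. eauto. }
  apply in_list_max in Hl. unfold level_bound in Hn. lia.
Qed.

Lemma leaf_flip_fixes_fresh E P :
  (forall n, P n = true -> level_bound E < n) -> fixes E (leaf_flip P).
Proof.
  intros HP y Hy. apply leaf_flip_fixed_iff. intros n Hn.
  exact (fresh_not_has_leaf Hy (HP n Hn)).
Qed.

Lemma has_leaf_leaf n m e : has_leaf n (leaf m e) -> n = m.
Proof. intros [e' [H|[]]]. injection H; auto. Qed.

Lemma has_fresh_leaf_cases E n x : level_bound E < n -> has_leaf n x ->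
  (exists e, x = leaf n e) \/
  exists m p e, p <> [] /\ x = lev m p e /\ fixes E (pair_flip m p).
Proof.
  intros Hn Hx. destruct x as [z|m [|w p] e].
  - destruct Hx as [e [H|[]]]. discriminate.
  - left. exists e. rewrite (has_leaf_leaf Hx). reflexivity.
  - right. exists m, (w :: p), e. repeat split; [discriminate|].
    intros y Hy. apply pair_flip_fixed. intros e' Hsub.
    apply (fresh_not_has_leaf Hy Hn).
    destruct Hx as [e0 [H|H]]; [discriminate|].
    exists e0. apply (subatoms_trans Hsub). simpl. right. exact H.
Qed.

Lemma pinned_fresh_leaf E n x : level_bound E < n -> has_leaf n x ->
  (forall m p, p <> [] -> fixes E (pair_flip m p) -> pair_flip m p x = x) ->
  exists e, x = leaf n e.
Proof.
  intros Hn Hx Hpin.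
  destruct (has_fresh_leaf_cases Hn Hx) as [Hleaf|[m [p [e [Hp [-> HE]]]]]]; auto.
  specialize (Hpin m p Hp HE). rewrite pair_flip_self in Hpin.
  injection Hpin. destruct e; discriminate.
Qed.

Definition twin (u : atom) : atom :=
  match u with base z => base z | lev m p e => lev m p (negb e) end.

Definition closure (E : list atom) : list atom :=
  flat_map (fun u => [u; twin u]) (flat_map subatoms E).

Definition base_names (l : list atom) : list A0 :=
  flat_map (fun u => match u with base z => [z] | lev _ _ _ => [] end) l.

Lemma exists_fresh_name (A0_infinite : ~ exists l : list A0, forall x, In x l) (L : list A0) :
  exists z, ~ In z L.
Proof.
  apply NNPP. intros HL. apply A0_infinite. exists L. intros x.
  apply NNPP. intros Hx. apply HL. eauto.
Qed.

(* Outside [closure E], a base atom is moved by its transposition with a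
   fresh name and a triple by its pair-flip, both invisible from [E]. *)
Lemma pinned_in_closure (A0_infinite : ~ exists l : list A0, forall x, In x l) E x :
  (forall pi, inGfull pi -> fixes E pi -> pi x = x) -> In x (closure E).
Proof.
  intros Hpin. apply NNPP. intros Hx.
  assert (in_closure : forall y u, In y E -> In u (subatoms y) ->
                         In u (closure E) /\ In (twin u) (closure E)).
  { intros y u Hy Hu.
    split; apply in_flat_map; exists u; (split; [apply in_flat_map; eauto|simpl; auto]). }
  destruct x as [z|m p e].
  - destruct (exists_fresh_name A0_infinite (z :: base_names (flat_map subatoms E))) as [z' Hz'].
    assert (Hfix : fixes E (base_swap z z')).
    { intros y Hy. apply relabel_fixed_iff. intros [w|m p e] Hu; simpl; auto.
      unfold transp. destruct (excluded_middle_informative (w = z)) as [->|Hwz].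
      - exfalso. exact (Hx (proj1 (in_closure _ _ Hy Hu))).
      - destruct (excluded_middle_informative (w = z')) as [->|]; auto.
        exfalso. apply Hz'. right. apply in_flat_map. exists (base z').
        split; [apply in_flat_map; eauto|simpl; auto]. }
    specialize (Hpin _ (base_swap_inGfull z z') Hfix). simpl in Hpin. injection Hpin.
    unfold transp. destruct (excluded_middle_informative (z = z)) as [_|[]]; auto.
    intros ->. apply Hz'. simpl; auto.
  - assert (Hfix : fixes E (pair_flip m p)).
    { intros y Hy. apply pair_flip_fixed. intros e' Hu.
      destruct (in_closure _ _ Hy Hu) as [H1 H2].
      destruct e, e'; simpl in *; auto. }
    specialize (Hpin _ (pair_flip_inGfull m p) Hfix).
    rewrite pair_flip_self in Hpin. injection Hpin. destruct e; discriminate.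
Qed.

Definition twin_set N (q1 q2 : list atom) : atom -> Prop :=
  fun x => exists e, x = lev N q1 e \/ x = lev N q2 e.

Lemma pred_ext (S T : atom -> Prop) : (forall x, S x <-> T x) -> S = T.
Proof.
  intros H. apply functional_extensionality. intros x. apply propositional_extensionality. auto.
Qed.

Lemma twin_set_comm N q1 q2 : twin_set N q1 q2 = twin_set N q2 q1.
Proof. apply pred_ext. intros x. unfold twin_set. firstorder. Qed.

Lemma twin_set_inj N N' q q' : twin_set N q q = twin_set N' q' q' -> N = N' /\ q = q'.
Proof.
  intros H. assert (Hx : twin_set N' q' q' (lev N q false)) by (rewrite <- H; exists false; auto).
  destruct Hx as [e [Hx|Hx]]; injection Hx; auto.
Qed.

Lemma set_act_twin_set pi N q1 q2 : inGfull pi ->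
  inAll (lev N q1 false) -> inAll (lev N q2 false) ->
  set_act pi (twin_set N q1 q2) = twin_set N (map pi q1) (map pi q2).
Proof.
  intros HG H1 H2. destruct (inGfull_lev HG H1) as [b1 Hb1], (inGfull_lev HG H2) as [b2 Hb2].
  apply pred_ext. intros x. unfold set_act, twin_set. split.
  - intros [y [[e [-> | ->]] <-]]; [rewrite Hb1|rewrite Hb2]; eauto.
  - intros [e [-> | ->]].
    + exists (lev N q1 (xorb b1 e)). split; eauto.
      rewrite Hb1, <- xorb_assoc_reverse, xorb_nilpotent. reflexivity.
    + exists (lev N q2 (xorb b2 e)). split; eauto.
      rewrite Hb2, <- xorb_assoc_reverse, xorb_nilpotent. reflexivity.
Qed.


Lemma twin_set_pair_mem N q : inAll (lev N q false) -> pair_mem (twin_set N q q).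
Proof.
  intros Hq. split.
  - intros x [e [-> | ->]]; exact (lev_inAll_bit e Hq).
  - exists (lev N q false), (lev N q true). split; [congruence|].
    intros x. split; [intros [[] [-> | ->]]|intros [-> | ->]; eexists]; auto.
Qed.

Lemma set_act_pair pi (Q : atom -> Prop) a b : (forall x, Q x <-> x = a \/ x = b) ->
  forall x, set_act pi Q x <-> x = pi a \/ x = pi b.
Proof.
  intros HQ x. unfold set_act. split.
  - intros [y [Hy <-]]. apply HQ in Hy as [-> | ->]; auto.
  - intros [-> | ->]; eexists; (split; [apply HQ|reflexivity]); auto.
Qed.

Lemma set_act_pair_stable pi (Q : atom -> Prop) a b : (forall x, Q x <-> x = a \/ x = b) ->
  (pi a = a /\ pi b = b) \/ (pi a = b /\ pi b = a) -> set_act pi Q = Q.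
Proof.
  intros HQ Hpi. apply pred_ext. intros x. rewrite (set_act_pair pi HQ), HQ.
  destruct Hpi as [[-> ->]|[-> ->]]; tauto.
Qed.

Lemma set_act_stable_mem pi (Q : atom -> Prop) x : set_act pi Q = Q -> Q x -> Q (pi x).
Proof. intros HQ Hx. rewrite <- HQ. exists x. auto. Qed.

Lemma sq_mem_act (pi : atom -> atom) (q : atom * atom) :
  inGfull pi -> sq_mem q -> sq_mem (sq_act pi q).
Proof. intros HG [H1 H2]. split; apply inGfull_inAll; auto. Qed.

Lemma seq_mem_act (pi : atom -> atom) (l : list atom) :
  inGfull pi -> seq_mem l -> seq_mem (seq_act pi l).
Proof.
  intros HG [HA HN]. rewrite Forall_forall in HA. split.
  - apply Forall_forall. intros y Hy. apply in_map_iff in Hy as [x [<- Hx]].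
    apply inGfull_inAll; auto.
  - apply NoDup_map_NoDup_ForallPairs; auto.
    intros x y Hx Hy. apply inGfull_inj; auto.
Qed.

Lemma pair_mem_act (pi : atom -> atom) (Q : atom -> Prop) :
  inGfull pi -> pair_mem Q -> pair_mem (set_act pi Q).
Proof.
  intros HG [HA [a [b [Hab HQ]]]]. split.
  - intros x [y [Hy <-]]. apply inGfull_inAll; auto.
  - exists (pi a), (pi b). split.
    + intros Habs. apply Hab. apply (inGfull_inj HG); auto; apply HA, HQ; auto.
    + apply set_act_pair; auto.
Qed.

Section Equivariant.
Variables (X Y : Type) (memX : X -> Prop) (actX : (atom -> atom) -> X -> X).
Variables (actY : (atom -> atom) -> Y -> Y) (f : X -> Y) (E : list atom).
Hypothesis f_inj : forall x y, memX x -> memX y -> f x = f y -> x = y.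
Hypothesis f_equiv : forall pi, inGfull pi -> fixes E pi ->
  forall x, memX x -> f (actX pi x) = actY pi (f x).
Hypothesis actX_mem : forall pi x, inGfull pi -> memX x -> memX (actX pi x).

Lemma equivariant_fixed_iff pi x : inGfull pi -> fixes E pi -> memX x ->
  actY pi (f x) = f x <-> actX pi x = x.
Proof.
  intros HG HE Hx. rewrite <- f_equiv by auto. split; [|congruence].
  apply f_inj; auto.
Qed.

End Equivariant.

End Atoms.

Fixpoint lists_upto {X : Type} (T : list X) (k : nat) : list (list X) :=
  match k with
  | 0 => [[]]
  | S k => [] :: flat_map (fun x => map (cons x) (lists_upto T k)) T
  end.

Lemma in_lists_upto {X : Type} (T : list X) k l :
  incl l T -> length l <= k -> In l (lists_upto T k).
Proof.
  revert l; induction k as [|k IH]; intros [|x l] Hl Hk; simpl in *; auto; try lia.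
  right. apply in_flat_map. exists x. split; [apply Hl; simpl; auto|].
  apply in_map, IH; [intros y Hy; apply Hl; simpl|]; auto with arith.
Qed.

Lemma nat_indexed_not_finite {X : Type} (W : list X) (R : nat -> X -> Prop) :
  (forall k, exists x, R k x) -> (forall k x, R k x -> In x W) ->
  (forall k k' x, R k x -> R k' x -> k = k') -> False.
Proof.
  intros Hex HW Huniq.
  assert (Hbuild : forall n, exists L, length L = n /\ NoDup L /\ incl L W /\
                     forall x, In x L -> exists k, k < n /\ R k x).
  { induction n as [|n [L [HL [HN [HI HR]]]]].
    - exists []. repeat split; [constructor|intros x []..].
    - destruct (Hex n) as [x Hx]. exists (x :: L). repeat split.
      + simpl; auto.
      + constructor; auto. intros HxL. destruct (HR x HxL) as [k [Hk Hkx]].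
        specialize (Huniq _ _ _ Hx Hkx). lia.
      + intros y [<-|Hy]; eauto.
      + intros y [<-|Hy]; [exists n; auto|].
        destruct (HR y Hy) as [k [Hk Hky]]. exists k; auto. }
  destruct (Hbuild (S (length W))) as [L [HL [HN [HI _]]]].
  pose proof (NoDup_incl_length HN HI). lia.
Qed.

Lemma three_in_two (P Q : nat -> Prop) n1 n2 n3 :
  n1 <> n2 -> n1 <> n3 -> n2 <> n3 ->
  (forall n n', P n -> P n' -> n = n') -> (forall n n', Q n -> Q n' -> n = n') ->
  P n1 \/ Q n1 -> P n2 \/ Q n2 -> P n3 \/ Q n3 -> False.
Proof. intros ? ? ? HP HQ [|] [|] [|]; eauto. Qed.

Section Cardinals.
Variable A0 : Type.
Local Notation atom := (atom A0).
Local Notation leaf := (@leaf A0).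

(** * The injections *)

Lemma sq_seq_inj : V_inj (@sq_mem A0) (@sq_act A0) (@seq_mem A0) (@seq_act A0).
Proof.
  exists (fun q => if excluded_middle_informative (fst q = snd q) then [fst q]
                   else [fst q; snd q]), [].
  split; [constructor|]. split; [|split].
  - intros [a b] [Ha Hb]; simpl.
    destruct (excluded_middle_informative (a = b)) as [_|Hab]; split; repeat constructor; auto.
    simpl. intros [Hba|[]]. auto.
  - intros [a b] [a' b'] _ _; simpl.
    destruct (excluded_middle_informative (a = b)), (excluded_middle_informative (a' = b'));
      intros Heq; injection Heq; intros; subst; auto; discriminate.
  - intros pi HG _ [a b] [Ha Hb]. simpl.
    destruct (excluded_middle_informative (pi a = pi b)) as [Hpi|Hpi];
    destruct (excluded_middle_informative (a = b)) as [Hab|Hab]; subst; auto.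
    + exfalso. exact (Hab (inGfull_inj HG Ha Hb Hpi)).
    + tauto.
Qed.

(* Large enough for [(code_level s, s, e)] to be an atom. *)
Definition code_level (s : list atom) : nat := S (max (length s) (list_max (map (@level A0) s))).

Definition seq_code (s : list atom) : atom -> Prop := twin_set (code_level s) s s.

Lemma code_inAll s e : Forall (@inAll A0) s -> inAll (lev (code_level s) s e).
Proof.
  intros Hs. exists (code_level s). apply lev_inA; [lia|].
  rewrite Forall_forall in *. intros a Ha. destruct (Hs a Ha) as [n Hn].
  apply inA_mono with (level a); [|exact (inA_level Hn)].
  pose proof (in_list_max (in_map (@level A0) s a Ha)). lia.
Qed.

Lemma seq_pair_inj : V_inj (@seq_mem A0) (@seq_act A0) (@pair_mem A0) (@set_act A0).
Proof.
  exists seq_code, []. split; [constructor|]. split; [|split].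
  - intros s [Hs _]. apply twin_set_pair_mem, code_inAll, Hs.
  - intros s s' _ _ Hss'. exact (proj2 (twin_set_inj Hss')).
  - intros pi HG _ s [Hs _]. unfold seq_code, seq_act.
    rewrite set_act_twin_set by (auto using code_inAll).
    replace (code_level (map pi s)) with (code_level s); auto.
    unfold code_level. rewrite length_map, map_map. do 3 f_equal.
    apply map_ext_in. intros a Ha. rewrite Forall_forall in Hs.
    symmetry. apply inGfull_level; auto.
Qed.

Lemma pair_fin_inj : V_inj (@pair_mem A0) (@set_act A0) (@fin_mem A0) (@set_act A0).
Proof.
  exists (fun Q => Q), []. split; [constructor|]. split; [|split]; auto.
  intros Q [HA [a [b [_ HQ]]]]. split; auto.
  exists [a; b]. intros x. rewrite HQ. simpl. intuition congruence.
Qed.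


(** * No bijections *)

Lemma leaf_flip_moves_leaf P n : P n = true -> leaf_flip P (leaf n false) <> leaf n false.
Proof. intros Hn. rewrite leaf_flip_leaf, Hn. discriminate. Qed.

Lemma leaf_flip_fresh_level (E : list atom) n :
  level_bound E < n -> fixes E (leaf_flip (Nat.eqb n)).
Proof. intros Hn. apply leaf_flip_fixes_fresh. intros k Hk. apply Nat.eqb_eq in Hk. lia. Qed.

Lemma three_leaves_seq_mem k :
  seq_mem [leaf (S k) false; leaf (S (S k)) false; leaf (S (S (S k))) false].
Proof.
  split; [repeat constructor; apply leaf_inAll|].
  repeat constructor; simpl; intros H; repeat destruct H as [H|H];
    try injection H; try lia; auto.
Qed.

(* Three fresh leaves cannot all be recovered from two atoms: each leaf level
   must occur in [a] or [b], and an atom containing a fresh leaf is a leaf. *)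
Lemma no_sq_seq_bij : ~ V_bij (@sq_mem A0) (@sq_act A0) (@seq_mem A0) (@seq_act A0).
Proof.
  intros [f [E [_ [_ [f_inj [f_surj f_equiv]]]]]].
  set (B := level_bound E).
  set (s := [leaf (S B) false; leaf (S (S B)) false; leaf (S (S (S B))) false]).
  destruct (f_surj s (three_leaves_seq_mem B)) as [[a b] [Hab Hf]].
  assert (Hfixed : forall pi, inGfull pi -> fixes E pi ->
            map pi s = s <-> pi a = a /\ pi b = b).
  { intros pi HG HE. change (map pi s) with (seq_act pi s). rewrite <- Hf.
    rewrite (equivariant_fixed_iff f_inj f_equiv (@sq_mem_act A0) HG HE Hab).
    unfold sq_act. simpl. split; [intros H; injection H|intros [-> ->]]; auto. }
  assert (Hcover : forall n, In n [S B; S (S B); S (S (S B))] ->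
            (B < n /\ has_leaf n a) \/ (B < n /\ has_leaf n b)).
  { intros n Hn. assert (Hfresh : B < n) by (simpl in Hn; lia).
    apply NNPP. intros Hab'.
    assert (Hflip : map (leaf_flip (Nat.eqb n)) s = s).
    { apply Hfixed; [apply leaf_flip_inGfull|apply leaf_flip_fresh_level; auto|].
      split; apply leaf_flip_fixed_iff; intros k Hk; apply Nat.eqb_eq in Hk; subst; tauto. }
    apply (leaf_flip_moves_leaf (Nat.eqb_refl n)).
    apply (map_id_in Hflip). unfold s. simpl in Hn |- *. intuition (subst; auto). }
  assert (Hunique : forall x n, x = a \/ x = b -> B < n -> has_leaf n x ->
            forall k, has_leaf k x -> n = k).
  { intros x n Hx Hn Hxn k Hk.
    destruct (pinned_fresh_leaf Hn Hxn) as [e ->]; [|symmetry; exact (has_leaf_leaf Hk)].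
    intros m p Hp HE.
    assert (Hpf : pair_flip m p a = a /\ pair_flip m p b = b).
    { apply Hfixed; [apply pair_flip_inGfull|auto|].
      unfold s. simpl. rewrite !pair_flip_leaf; auto. }
    destruct Hx as [-> | ->]; tauto. }
  apply (three_in_two (P := fun n => B < n /\ has_leaf n a) (Q := fun n => B < n /\ has_leaf n b)
                      (n1 := S B) (n2 := S (S B)) (n3 := S (S (S B)))); try lia.
  - intros n n' [Hn Ha] [_ Ha']. exact (Hunique a n (or_introl eq_refl) Hn Ha n' Ha').
  - intros n n' [Hn Hb] [_ Hb']. exact (Hunique b n (or_intror eq_refl) Hn Hb n' Hb').
  - apply Hcover. simpl. auto.
  - apply Hcover. simpl. auto.
  - apply Hcover. simpl. auto.
Qed.


(* Every level carries a pair of twin leaves fixed by all of G; their preimages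
   would be infinitely many sequences over the finite set [closure E]. *)
Lemma no_seq_pair_bij (A0_infinite : ~ exists l : list A0, forall x, In x l) :
  ~ V_bij (@seq_mem A0) (@seq_act A0) (@pair_mem A0) (@set_act A0).
Proof.
  intros [f [E [_ [_ [f_inj [f_surj f_equiv]]]]]].
  set (twin_leaves k := twin_set (S k) ([] : list atom) []).
  assert (Hpair : forall k, pair_mem (twin_leaves k))
    by (intros k; apply twin_set_pair_mem, leaf_inAll).
  set (T := closure E).
  apply (nat_indexed_not_finite (W := lists_upto T (length T))
           (R := fun k s => seq_mem s /\ f s = twin_leaves k)).
  - intros k. destruct (f_surj _ (Hpair k)) as [s Hs]. eauto.
  - intros k s [Hs Hf].
    assert (HsT : incl s T).
    { intros x Hx. apply (pinned_in_closure A0_infinite). intros pi HG HE.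
      apply (map_id_in (f := pi) (p := s)); auto.
      apply (equivariant_fixed_iff f_inj f_equiv (@seq_mem_act A0) HG HE Hs).
      rewrite Hf. unfold twin_leaves. rewrite set_act_twin_set; auto; apply leaf_inAll. }
    apply in_lists_upto; auto. apply NoDup_incl_length; auto. apply Hs.
  - intros k k' s [_ Hk] [_ Hk']. rewrite Hk in Hk'.
    apply twin_set_inj in Hk' as [Hkk' _]. injection Hkk'. auto.
Qed.


Definition crossed_set k : atom -> Prop :=
  twin_set (S (S (S k))) [leaf (S k) false; leaf (S (S k)) false]
           [leaf (S k) true; leaf (S (S k)) true].

Definition flip_both k : atom -> atom := leaf_flip (fun m => (S k =? m) || (S (S k) =? m)).

Lemma crossed_set_inAll k q :
  q = [leaf (S k) false; leaf (S (S k)) false] \/ q = [leaf (S k) true; leaf (S (S k)) true] ->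
  inAll (lev (S (S (S k))) q false).
Proof.
  intros Hq. exists (S (S (S k))).
  apply lev_inA; [destruct Hq as [-> | ->]; simpl; lia|].
  apply Forall_forall. destruct Hq as [-> | ->]; cbn [In];
    intros x [<-|[<-|[]]]; solve [apply leaf_inA | apply inA_mono with (S k); [lia|apply leaf_inA]].
Qed.

Lemma crossed_set_fin_mem k : fin_mem (crossed_set k).
Proof.
  split.
  - intros x [e [-> | ->]]; apply lev_inAll_bit with false, crossed_set_inAll; auto.
  - eexists [lev _ _ false; lev _ _ true; lev _ _ false; lev _ _ true].
    intros x. unfold crossed_set, twin_set. simpl. split.
    + intros [[] [-> | ->]]; tauto.
    + intros [<-|[<-|[<-|[<-|[]]]]]; eauto.
Qed.

Lemma set_act_crossed_set pi k : inGfull pi ->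
  set_act pi (crossed_set k) =
  twin_set (S (S (S k))) (map pi [leaf (S k) false; leaf (S (S k)) false])
           (map pi [leaf (S k) true; leaf (S (S k)) true]).
Proof. intros HG. apply set_act_twin_set; auto; apply crossed_set_inAll; auto. Qed.

Lemma crossed_set_flip_both k : set_act (flip_both k) (crossed_set k) = crossed_set k.
Proof.
  rewrite set_act_crossed_set by apply leaf_flip_inGfull.
  unfold flip_both. simpl map. rewrite !leaf_flip_leaf, !Nat.eqb_refl, orb_true_r.
  simpl.
  apply twin_set_comm.
Qed.

Lemma crossed_set_flip_first k :
  set_act (leaf_flip (Nat.eqb (S k))) (crossed_set k) <> crossed_set k.
Proof.
  rewrite set_act_crossed_set by apply leaf_flip_inGfull.
  simpl map. rewrite !leaf_flip_leaf, Nat.eqb_refl.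
  rewrite (proj2 (Nat.eqb_neq k (S k))) by lia.
  intros Heq.
  assert (Hx : crossed_set k (lev (S (S (S k))) [leaf (S k) true; leaf (S (S k)) false] false)).
  { rewrite <- Heq. exists false. auto. }
  destruct Hx as [e [H|H]]; injection H; discriminate.
Qed.

Lemma crossed_set_pair_flip k m p : p <> [] ->
  set_act (pair_flip m p) (crossed_set k) = crossed_set k.
Proof.
  intros Hp. rewrite set_act_crossed_set by apply pair_flip_inGfull.
  simpl map. rewrite !pair_flip_leaf; auto.
Qed.

(* If [x] is the leaf itself, [flip_both] forces [y] to be its twin, so the
   first-level flip swaps [x] and [y]; otherwise the pair-flip of [x] forces
   [y = twin x], and [flip_both] can neither fix [x] nor send it to [y]. *)
Lemma crossed_pair_avoids_first_level E k (Q : atom -> Prop) x y :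
  level_bound E < S k -> (forall z, Q z <-> z = x \/ z = y) ->
  set_act (leaf_flip (Nat.eqb (S k))) Q <> Q -> set_act (flip_both k) Q = Q ->
  (forall m p, p <> [] -> fixes E (pair_flip m p) -> set_act (pair_flip m p) Q = Q) ->
  ~ has_leaf (S k) x.
Proof.
  intros Hfresh Hxy HgQ HhQ HpQ Hx.
  assert (Hh : flip_both k x = x \/ flip_both k x = y)
    by (apply Hxy, (set_act_stable_mem HhQ), Hxy; auto).
  destruct (has_fresh_leaf_cases Hfresh Hx) as [[e ->]|[m [p [e [Hp [-> HE]]]]]].
  - unfold flip_both in Hh. rewrite leaf_flip_leaf, Nat.eqb_refl in Hh.
    destruct Hh as [Hh|<-]; [destruct e; discriminate|].
    apply HgQ, (set_act_pair_stable Hxy). right.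
    rewrite !leaf_flip_leaf, Nat.eqb_refl, xorb_true_l, negb_involutive. auto.
  - assert (Hpf : pair_flip m p (lev m p e) = lev m p e \/ pair_flip m p (lev m p e) = y)
      by (apply Hxy, (set_act_stable_mem (HpQ m p Hp HE)), Hxy; auto).
    rewrite pair_flip_self in Hpf.
    destruct Hpf as [Hpf|<-]; [injection Hpf; destruct e; discriminate|].
    unfold flip_both in Hh. destruct Hh as [Hh|Hh].
    + rewrite leaf_flip_fixed_iff in Hh. apply (Hh (S k)); auto.
      rewrite Nat.eqb_refl. reflexivity.
    + rewrite leaf_flip_lev in Hh by auto. injection Hh. destruct e; discriminate.
Qed.

(* The preimage {a, b} of [crossed_set] is stabilised by [flip_both] but not by
   flipping the first leaf level alone, so that level occurs in [a] or [b]. *)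
Lemma no_pair_fin_bij : ~ V_bij (@pair_mem A0) (@set_act A0) (@fin_mem A0) (@set_act A0).
Proof.
  intros [f [E [_ [_ [f_inj [f_surj f_equiv]]]]]].
  remember (level_bound E) as k eqn:Hk.
  assert (Hfresh : level_bound E < S k) by lia.
  destruct (f_surj _ (crossed_set_fin_mem k)) as [Q [HQ Hf]].
  assert (Hfixed : forall pi, inGfull pi -> fixes E pi ->
            set_act pi (crossed_set k) = crossed_set k <-> set_act pi Q = Q).
  { intros pi HG HE. rewrite <- Hf.
    exact (equivariant_fixed_iff f_inj f_equiv (@pair_mem_act A0) HG HE HQ). }
  assert (HgQ : set_act (leaf_flip (Nat.eqb (S k))) Q <> Q).
  { intros HgQ. apply (crossed_set_flip_first (k := k)).
    apply Hfixed; auto using leaf_flip_inGfull, leaf_flip_fresh_level. }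
  assert (HhQ : set_act (flip_both k) Q = Q).
  { apply Hfixed; [apply leaf_flip_inGfull| |apply crossed_set_flip_both].
    apply leaf_flip_fixes_fresh. intros n Hn.
    apply orb_true_iff in Hn as [Hn|Hn]; apply Nat.eqb_eq in Hn; lia. }
  assert (HpQ : forall m p, p <> [] -> fixes E (pair_flip m p) -> set_act (pair_flip m p) Q = Q)
    by (intros; apply Hfixed; auto using pair_flip_inGfull, crossed_set_pair_flip).
  destruct HQ as [_ [a [b [_ HQab]]]].
  assert (HQba : forall z, Q z <-> z = b \/ z = a) by (intros z; rewrite HQab; tauto).
  apply HgQ, (set_act_pair_stable HQab). left.
  split; apply leaf_flip_fixed_iff; intros n Hn; apply Nat.eqb_eq in Hn as <-;
    eapply crossed_pair_avoids_first_level; eauto.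
Qed.

End Cardinals.

Theorem mainTheorem9 (A0 : Type) (A0_infinite : ~ exists l : list A0, forall x, In x l) :
  V_lt (@sq_mem A0) (@sq_act A0) (@seq_mem A0) (@seq_act A0) /\
  V_lt (@seq_mem A0) (@seq_act A0) (@pair_mem A0) (@set_act A0) /\
  V_lt (@pair_mem A0) (@set_act A0) (@fin_mem A0) (@set_act A0).
Proof.
  split; [|split]; split.
  - apply sq_seq_inj.
  - apply no_sq_seq_bij.
  - apply seq_pair_inj.
  - apply no_seq_pair_bij, A0_infinite.
  - apply pair_fin_inj.
  - apply no_pair_fin_bij.
Qed.
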